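(* Let $\lambda_1,\lambda_2$ be as in the context, $K\in(-1,1)$, and let $b:\mathbb{R}\to\mathbb{R}$ be the solution of $b'(v)=\sqrt{\lambda_1^2-K(\lambda_1^2\cos^2 b(v)+\lambda_2^2\sin^2 b(v))}$, $b(0)=0$. Define $g:\mathbb{C}\to\mathbb{C}$ by $g(u+iv)=e^{-\lambda_1u}e^{ib(v)}$. Then $g$ satisfies $$g_{z\bar z}=\frac{2\left[\lambda_1^2(g+\bar g)-\lambda_2^2(g-\bar g)\right]}{\lambda_1^2(g+\bar g)^2-\lambda_2^2(g-\bar g)^2}\,g_zg_{\bar z},$$ and its Hopf differential is $Q=\frac{K}{16}\,dz^2$.
   Context: Either $\lambda_1>\lambda_2>0$ or $\lambda_1=\lambda_2=1$. Here $z=u+iv$, $g_z=\frac12(g_u-ig_v)$, $g_{\bar z}=\frac12(g_u+ig_v)$. The Hopf differential associated to $g$ is the quadratic differential $Q=\dfrac{g_z\bar g_z}{\lambda_1^2(g+\bar g)^2-\lambda_2^2(g-\bar g)^2}\,dz^2$, where $\bar g_z=\partial_z(\bar g)$. *)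

From Stdlib Require Import Reals.
From Coquelicot Require Import Coquelicot.
Open Scope R_scope.

(* A C-valued function of the two real variables (u,v), z = u + i v. *)
Definition CRR := R -> R -> C.

Definition pd_u (f : CRR) : CRR := fun u v =>
  (Derive (fun t => Re (f t v)) u, Derive (fun t => Im (f t v)) u).
Definition pd_v (f : CRR) : CRR := fun u v =>
  (Derive (fun t => Re (f u t)) v, Derive (fun t => Im (f u t)) v).

Definition dz (f : CRR) : CRR := fun u v =>
  Cmult (RtoC (1/2)) (Cminus (pd_u f u v) (Cmult Ci (pd_v f u v))).
Definition dzb (f : CRR) : CRR := fun u v =>
  Cmult (RtoC (1/2)) (Cplus (pd_u f u v) (Cmult Ci (pd_v f u v))).

Definition conjf (f : CRR) : CRR := fun u v => Cconj (f u v).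

Definition lambdas_ok (l1 l2 : R) : Prop :=
  (l1 > l2 /\ l2 > 0) \/ (l1 = 1 /\ l2 = 1).

Definition gfun (l1 : R) (b : R -> R) : CRR := fun u v =>
  Cmult (RtoC (exp (- l1 * u))) (cos (b v), sin (b v)).

Definition hopf_den (l1 l2 : R) (w : C) : C :=
  Cminus (Cmult (RtoC (l1^2)) (Cmult (Cplus w (Cconj w)) (Cplus w (Cconj w))))
         (Cmult (RtoC (l2^2)) (Cmult (Cminus w (Cconj w)) (Cminus w (Cconj w)))).

(* coefficient of the Hopf differential Q = hopf_coeff dz^2 *)
Definition hopf_coeff (l1 l2 : R) (g : CRR) (u v : R) : C :=
  Cdiv (Cmult (dz g u v) (dz (conjf g) u v)) (hopf_den l1 l2 (g u v)).

From Stdlib Require Import Reals Lra FunctionalExtensionality.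
From Coquelicot Require Import Coquelicot.
Open Scope R_scope.

(* Any function E(u) r(v) e^{iθ(v)} with E(u) = e^{-a u} has Wirtinger derivatives of
   the same separated form, so g_z, g_zbar, (gbar)_z and g_{z zbar} are explicit real
   multiples of e^{-λ1 u} e^{i b(v)} (or e^{-i b(v)}), with coefficients in b' and b''.
   Writing D = λ1² cos² b + λ2² sin² b, the ODE gives λ1² - b'² = K D and
   b'' = K (λ1² - λ2²) cos b sin b, while the denominator of Q is 4 e^{-2 λ1 u} D.
   Hence g_z (gbar)_z = K D e^{-2 λ1 u} / 4, which gives Q = K/16 dz², and the
   equation for g_{z zbar} reduces to the polynomial identity
   (λ1² cos b - i λ2² sin b) e^{i b} = D + i (λ1² - λ2²) cos b sin b. *)

Ltac C_field := apply injective_projections; simpl; field.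

Definition cis (x : R) : C := (cos x, sin x).

Lemma cis_mul_cis_opp (x : R) : (cis x * cis (- x))%C = 1%C.
Proof.
  pose proof (sin2_cos2 x) as Hsc; unfold Rsqr in Hsc.
  apply injective_projections; simpl; rewrite cos_neg, sin_neg; lra.
Qed.

Lemma Cdiv_RtoC (z : C) (d : R) : d <> 0 -> (z / RtoC d)%C = (RtoC (/ d) * z)%C.
Proof.
  intros Hd. unfold Cdiv. rewrite RtoC_inv by exact Hd. apply Cmult_comm.
Qed.

Section SeparatedPolar.

Variables (a : R) (r θ : R -> R).

Definition sep_polar : CRR := fun u v => (RtoC (exp (- a * u) * r v) * cis (θ v))%C.

Lemma pd_u_sep_polar (u v : R) : pd_u sep_polar u v = (RtoC (- a) * sep_polar u v)%C.
Proof.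
  unfold pd_u, sep_polar; simpl.
  apply injective_projections; simpl; apply is_derive_unique; auto_derive; auto; ring.
Qed.

Lemma pd_v_sep_polar (u v r' θ' : R) :
  is_derive r v r' -> is_derive θ v θ' ->
  pd_v sep_polar u v = (RtoC (exp (- a * u)) * (r', r v * θ')%R * cis (θ v))%C.
Proof.
  intros Hr Hθ.
  assert (Er : Derive (fun t => r t) v = r') by now apply is_derive_unique.
  assert (Eθ : Derive (fun t => θ t) v = θ') by now apply is_derive_unique.
  assert (ex_derive r v) by now exists r'.
  assert (ex_derive θ v) by now exists θ'.
  unfold pd_v, sep_polar; simpl.
  apply injective_projections; simpl; apply is_derive_unique; auto_derive; auto;
    rewrite Er, Eθ; ring.
Qed.

Lemma dz_sep_polar (u v r' θ' : R) :
  is_derive r v r' -> is_derive θ v θ' ->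
  dz sep_polar u v =
    (RtoC (exp (- a * u) / 2) * (r v * (θ' - a), - r')%R * cis (θ v))%C.
Proof.
  intros Hr Hθ. unfold dz.
  rewrite pd_u_sep_polar, (pd_v_sep_polar u v r' θ' Hr Hθ).
  unfold sep_polar, cis. C_field.
Qed.

Lemma dzb_sep_polar (u v r' θ' : R) :
  is_derive r v r' -> is_derive θ v θ' ->
  dzb sep_polar u v =
    (RtoC (exp (- a * u) / 2) * (- r v * (θ' + a), r')%R * cis (θ v))%C.
Proof.
  intros Hr Hθ. unfold dzb.
  rewrite pd_u_sep_polar, (pd_v_sep_polar u v r' θ' Hr Hθ).
  unfold sep_polar, cis. C_field.
Qed.

End SeparatedPolar.

Lemma conjf_sep_polar (a : R) (r θ : R -> R) :
  conjf (sep_polar a r θ) = sep_polar a r (fun v => - θ v).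
Proof.
  apply functional_extensionality; intro u; apply functional_extensionality; intro v.
  unfold conjf, sep_polar, cis; rewrite cos_neg, sin_neg.
  C_field.
Qed.

Lemma gfun_sep_polar (l1 : R) (b : R -> R) : gfun l1 b = sep_polar l1 (fun _ => 1) b.
Proof.
  apply functional_extensionality; intro u; apply functional_extensionality; intro v.
  unfold gfun, sep_polar, cis. C_field.
Qed.

Definition wnorm2_cis (l1 l2 x : R) : R := l1^2 * cos x ^ 2 + l2^2 * sin x ^ 2.

Lemma hopf_den_polar (l1 l2 ρ x : R) :
  hopf_den l1 l2 (RtoC ρ * cis x)%C = RtoC (4 * ρ^2 * wnorm2_cis l1 l2 x).
Proof. unfold hopf_den, wnorm2_cis, cis. C_field. Qed.

Lemma wnorm2_cis_bounds (l1 l2 x : R) : 0 < l2 <= l1 -> 0 < wnorm2_cis l1 l2 x <= l1^2.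
Proof.
  intros Hl. pose proof (sin2_cos2 x) as Hsc. unfold wnorm2_cis, Rsqr in *.
  assert (l2^2 <= l1^2) by nra.
  assert (0 < l2^2) by nra.
  split; nra.
Qed.

Lemma lambdas_ok_bounds (l1 l2 : R) : lambdas_ok l1 l2 -> 0 < l2 <= l1.
Proof. intros [[? ?] | [-> ->]]; lra. Qed.

Definition speed (l1 l2 K x : R) : R := sqrt (l1^2 - K * wnorm2_cis l1 l2 x).

Section HopfExample.

Variables (l1 l2 K : R) (b : R -> R).
Hypothesis Hl : 0 < l2 <= l1.
Hypothesis HK : -1 < K < 1.
Hypothesis Hb : forall v, is_derive b v (speed l1 l2 K (b v)).

Lemma speed_radicand_pos (x : R) : 0 < l1^2 - K * wnorm2_cis l1 l2 x.
Proof.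
  pose proof (wnorm2_cis_bounds l1 l2 x Hl).
  destruct (Rle_dec 0 K); nra.
Qed.

Lemma K_mul_wnorm2_cis (x : R) : K * wnorm2_cis l1 l2 x = l1^2 - speed l1 l2 K x ^ 2.
Proof.
  unfold speed. rewrite pow2_sqrt; [ring |].
  apply Rlt_le, speed_radicand_pos.
Qed.

Lemma speed_pos (x : R) : 0 < speed l1 l2 K x.
Proof. apply sqrt_lt_R0, speed_radicand_pos. Qed.

Lemma is_derive_speed (x : R) :
  is_derive (speed l1 l2 K) x
    (K * (l1^2 - l2^2) * cos x * sin x / speed l1 l2 K x).
Proof.
  pose proof (speed_radicand_pos x) as Hpos.
  pose proof (speed_pos x) as Hspeed.
  unfold speed in *.
  replace (K * (l1^2 - l2^2) * cos x * sin x / sqrt (l1^2 - K * wnorm2_cis l1 l2 x))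
    with (- K * (- 2 * (l1^2 - l2^2) * cos x * sin x)
          / (2 * sqrt (l1^2 - K * wnorm2_cis l1 l2 x))) by (field; lra).
  apply (is_derive_sqrt (fun t => l1^2 - K * wnorm2_cis l1 l2 t)); [| exact Hpos].
  unfold wnorm2_cis. auto_derive; [exact I | ring].
Qed.

Lemma dz_gfun (u v : R) :
  dz (gfun l1 b) u v =
    (RtoC (exp (- l1 * u) * (speed l1 l2 K (b v) - l1) / 2) * cis (b v))%C.
Proof.
  rewrite gfun_sep_polar, (dz_sep_polar _ _ _ _ _ 0 (speed l1 l2 K (b v)));
    [C_field | now auto_derive | apply Hb].
Qed.

Lemma dzb_gfun (u v : R) :
  dzb (gfun l1 b) u v =
    (RtoC (- exp (- l1 * u) * (speed l1 l2 K (b v) + l1) / 2) * cis (b v))%C.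
Proof.
  rewrite gfun_sep_polar, (dzb_sep_polar _ _ _ _ _ 0 (speed l1 l2 K (b v)));
    [C_field | now auto_derive | apply Hb].
Qed.

Lemma dz_conjf_gfun (u v : R) :
  dz (conjf (gfun l1 b)) u v =
    (RtoC (- exp (- l1 * u) * (speed l1 l2 K (b v) + l1) / 2) * cis (- b v))%C.
Proof.
  rewrite gfun_sep_polar, conjf_sep_polar,
    (dz_sep_polar _ _ _ _ _ 0 (- speed l1 l2 K (b v)));
    [C_field | now auto_derive | apply (is_derive_opp b), Hb].
Qed.

Lemma dzb_gfun_sep_polar :
  dzb (gfun l1 b) = sep_polar l1 (fun v => - (speed l1 l2 K (b v) + l1) / 2) b.
Proof.
  apply functional_extensionality; intro u; apply functional_extensionality; intro v.
  rewrite dzb_gfun. unfold sep_polar. C_field.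
Qed.

Lemma dz_dzb_gfun (u v : R) :
  dz (dzb (gfun l1 b)) u v =
    (RtoC (exp (- l1 * u) / 4)
     * (K * wnorm2_cis l1 l2 (b v), K * (l1^2 - l2^2) * cos (b v) * sin (b v))%R
     * cis (b v))%C.
Proof.
  rewrite dzb_gfun_sep_polar,
    (dz_sep_polar _ _ _ _ _ (- (K * (l1^2 - l2^2) * cos (b v) * sin (b v)) / 2)
       (speed l1 l2 K (b v))).
  - rewrite K_mul_wnorm2_cis. C_field.
  - assert (Eb : Derive (fun t => b t) v = speed l1 l2 K (b v))
      by now apply is_derive_unique.
    assert (Es : Derive (fun x => speed l1 l2 K x) (b v)
                 = K * (l1^2 - l2^2) * cos (b v) * sin (b v) / speed l1 l2 K (b v))
      by (apply is_derive_unique, is_derive_speed).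
    pose proof (speed_pos (b v)).
    auto_derive.
    + split; [eexists; apply is_derive_speed | split; [eexists; apply Hb | exact I]].
    + rewrite Eb, Es. field. lra.
  - apply Hb.
Qed.

Lemma dz_mul_dzb_gfun (u v : R) :
  (dz (gfun l1 b) u v * dzb (gfun l1 b) u v)%C =
    (RtoC (K * wnorm2_cis l1 l2 (b v) * exp (- l1 * u) ^ 2 / 4) * (cis (b v) * cis (b v)))%C.
Proof. rewrite dz_gfun, dzb_gfun, K_mul_wnorm2_cis. C_field. Qed.

Lemma dz_mul_dz_conjf_gfun (u v : R) :
  (dz (gfun l1 b) u v * dz (conjf (gfun l1 b)) u v)%C =
    RtoC (K * wnorm2_cis l1 l2 (b v) * exp (- l1 * u) ^ 2 / 4).
Proof.
  rewrite dz_gfun, dz_conjf_gfun, K_mul_wnorm2_cis.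
  rewrite <- (Cmult_1_r (RtoC (_ * exp _ ^ 2 / 4))), <- (cis_mul_cis_opp (b v)).
  C_field.
Qed.

Lemma hopf_den_gfun (u v : R) :
  hopf_den l1 l2 (gfun l1 b u v) = RtoC (4 * exp (- l1 * u) ^ 2 * wnorm2_cis l1 l2 (b v)).
Proof. exact (hopf_den_polar l1 l2 (exp (- l1 * u)) (b v)). Qed.

End HopfExample.

Theorem proposition4p2 (l1 l2 K : R) (b : R -> R) :
  lambdas_ok l1 l2 ->
  -1 < K < 1 ->
  (forall v, is_derive b v
     (sqrt (l1^2 - K * (l1^2 * (cos (b v))^2 + l2^2 * (sin (b v))^2)))) ->
  b 0 = 0 ->
  forall u v : R,
    let g := gfun l1 b in
    let w := g u v in
    dz (dzb g) u v =
      Cmult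
        (Cdiv (Cmult (RtoC 2)
                 (Cminus (Cmult (RtoC (l1^2)) (Cplus w (Cconj w)))
                         (Cmult (RtoC (l2^2)) (Cminus w (Cconj w)))))
              (hopf_den l1 l2 w))
        (Cmult (dz g u v) (dzb g u v))
    /\ hopf_coeff l1 l2 g u v = RtoC (K / 16).
Proof.
  intros Hl HK Hb _ u v g w.
  pose proof (lambdas_ok_bounds _ _ Hl) as Hlam.
  pose proof (wnorm2_cis_bounds l1 l2 (b v) Hlam) as Ha.
  pose proof (exp_pos (- l1 * u)) as He.
  assert (Hden : 4 * exp (- l1 * u) ^ 2 * wnorm2_cis l1 l2 (b v) <> 0)
    by (apply Rgt_not_eq; pose proof (pow_lt _ 2 He); nra).
  split.
  - unfold w, g.
    rewrite (dz_dzb_gfun l1 l2 K b Hlam HK Hb), (dz_mul_dzb_gfun l1 l2 K b Hlam HK Hb),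
      hopf_den_gfun, (Cdiv_RtoC _ _ Hden).
    unfold wnorm2_cis in *. C_field; split; nra.
  - unfold hopf_coeff, g.
    rewrite (dz_mul_dz_conjf_gfun l1 l2 K b Hlam HK Hb), hopf_den_gfun,
      <- (RtoC_div _ _ Hden).
    f_equal. field. lra.
Qed.
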